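(* Let $G$ and $H$ be finite vertex-transitive graphs with $\frac{\alpha(G)}{|V(G)|}\geq\frac{\alpha(H)}{|V(H)|}$. Then \[\alpha(G\times H)=\alpha(G)\,|V(H)|,\] and at least one of the following holds: (i) $G\times H$ is MIS-normal; (ii) $\frac{\alpha(G)}{|V(G)|}=\frac{\alpha(H)}{|V(H)|}$ and at least one of $G$, $H$ is IS-imprimitive; (iii) $\frac{\alpha(G)}{|V(G)|}>\frac{\alpha(H)}{|V(H)|}$ and $H$ is disconnected.
   Context: All graphs are finite and simple; $\alpha(G)$ denotes the independence number of $G$. The direct product $G\times H$ has vertex set $V(G)\times V(H)$, with $(u_1,v_1)$ adjacent to $(u_2,v_2)$ if and only if $u_1u_2\in E(G)$ and $v_1v_2\in E(H)$. A maximum independent set is an independent set of size $\alpha$. The product $G\times H$ is called MIS-normal if every maximum independent set of $G\times H$ is the preimage of an independent set of one factor under the corresponding projection, i.e. is of the form $I\times V(H)$ with $I$ independent in $G$, or $V(G)\times J$ with $J$ independent in $H$. For $A\subseteq V(G)$, let $N_G(A)=\{b\in V(G): ab\in E(G)\text{ for some }a\in A\}$ and $N_G[A]=N_G(A)\cup A$. A (nonempty) independent set $A$ of $G$ is called imprimitive if $|A|<\alpha(G)$ and $\frac{|A|}{|N_G[A]|}=\frac{\alpha(G)}{|V(G)|}$. The graph $G$ is IS-imprimitive if it has an imprimitive independent set, and IS-primitive otherwise. *)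

From HB Require Import structures.
From mathcomp Require Import all_boot all_order all_algebra all_fingroup.
Local Open Scope ring_scope.
Set Implicit Arguments. Unset Strict Implicit. Unset Printing Implicit Defensive.
Import Order.TTheory GRing.Theory Num.Theory.

Section Graphs.
Variable T : finType.

Definition simple_graph (e : rel T) : Prop := symmetric e /\ irreflexive e.

Definition independent (e : rel T) (A : {set T}) : bool :=
  [forall x in A, forall y in A, ~~ e x y].

Definition alpha (e : rel T) : nat :=
  \max_(A : {set T} | independent e A) #|A|.

Definition max_independent (e : rel T) (A : {set T}) : bool :=
  independent e A && (#|A| == alpha e).

Definition automorphism (e : rel T) (f : {perm T}) : Prop :=
  forall x y, e (f x) (f y) = e x y.

Definition vertex_transitive (e : rel T) : Prop :=
  forall x y, exists f : {perm T}, automorphism e f /\ f x = y.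

Definition connected (e : rel T) : Prop := forall x y, connect e x y.

Definition nbhd (e : rel T) (A : {set T}) : {set T} :=
  [set b | [exists a in A, e a b]].
Definition cnbhd (e : rel T) (A : {set T}) : {set T} := nbhd e A :|: A.

Definition ind_ratio (e : rel T) : rat := (alpha e)%:R / #|T|%:R.

Definition imprimitive (e : rel T) (A : {set T}) : Prop :=
  [/\ A != set0, independent e A, (#|A| < alpha e)%N &
      (#|A|%:R / #|cnbhd e A|%:R : rat) = ind_ratio e].

Definition IS_imprimitive (e : rel T) : Prop := exists A, imprimitive e A.
End Graphs.

Definition dprod_rel (T U : finType) (e1 : rel T) (e2 : rel U) : rel (T * U) :=
  fun p q => e1 p.1 q.1 && e2 p.2 q.2.

Definition MIS_normal (T U : finType) (e1 : rel T) (e2 : rel U) : Prop :=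
  forall S : {set T * U}, max_independent (dprod_rel e1 e2) S ->
    (exists2 I : {set T}, independent e1 I & S = setX I [set: U]) \/
    (exists2 J : {set U}, independent e2 J & S = setX [set: T] J).

(* For an independent set A of a vertex-transitive graph, averaging the exchange
   inequality |A| <= |M :&: N[A]| over all automorphic images M of a maximum
   independent set gives |A| / |N[A]| <= alpha / |V|; equality for a nonempty,
   non-maximum A is imprimitivity, and the trace of a maximum independent set on a
   connected component of a disconnected graph attains it.
   Given an independent set S of G x H, split each row S_x into the vertices J_x
   without a neighbour in S_x and the rest; J_x is independent in H, and the rest,
   read by columns, gives independent sets C_y of G whose closed neighbourhoods
   avoid the rows x with y in N[J_x].  Hence the sets {x} x N[J_x] and the column
   parts containing the N[C_y] are disjoint, and summing the two ratio bounds gives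
   |S| <= alpha(G) |V(H)|.  For a maximum S every bound is tight; without
   imprimitivity each J_x and C_y is empty or maximum, so S consists of full
   columns or of full rows, which all coincide when the indexing factor is connected. *)

From mathcomp Require Import all_boot all_order all_algebra all_fingroup.
From mathcomp Require Import zify.
From Stdlib Require Import Classical.
Import Order.TTheory GRing.Theory Num.Theory.
Set Implicit Arguments. Unset Strict Implicit. Unset Printing Implicit Defensive.

Section Counting.
Local Open Scope nat_scope.

Lemma card_setI_sum (T : finType) (B : {pred T}) (P : pred T) :
  #|[set x in B | P x]| = \sum_(x in B) P x.
Proof. by rewrite -sum1dep_card big_mkcondr; apply: eq_bigr => x _; case: (P x). Qed.

Lemma double_count (T U : finType) (A : {pred T}) (B : {pred U}) (R : T -> U -> bool) :
  \sum_(x in A) #|[set y in B | R x y]| = \sum_(y in B) #|[set x in A | R x y]|.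
Proof.
under eq_bigr do rewrite card_setI_sum.
by rewrite exchange_big; under [RHS]eq_bigr do rewrite card_setI_sum.
Qed.

Lemma double_count_set (T U : finType) (R : T -> U -> bool) :
  \sum_x #|[set y | R x y]| = \sum_y #|[set x | R x y]|.
Proof.
transitivity (\sum_(x in predT) #|[set y in predT | R x y]|).
  by apply: eq_bigr => x _; apply: eq_card => y; rewrite !inE.
by rewrite double_count; apply: eq_bigr => y _; apply: eq_card => x; rewrite !inE.
Qed.

Lemma card_set_pairs (T U : finType) (S : {set T * U}) :
  #|S| = \sum_x #|[set y | (x, y) \in S]|.
Proof.
under [RHS]eq_bigr do rewrite -sum1dep_card.
by rewrite pair_big_dep -sum1_card; apply: eq_bigl => -[x y].
Qed.

Lemma sum_leq_eq (I : finType) (f g : I -> nat) :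
  (forall i, f i <= g i) -> \sum_i f i = \sum_i g i -> forall i, f i = g i.
Proof.
move=> le_fg eq_sum i.
have : \sum_i (g i - f i) == 0 by rewrite sumnB // eq_sum subnn.
rewrite sum_nat_eq0 => /forallP /(_ i); rewrite subn_eq0 => le_gf.
by apply/eqP; rewrite eqn_leq le_fg.
Qed.

Lemma sum_leq_eq2 (I J : finType) (f g : I -> nat) (f' g' : J -> nat) :
  (forall i, f i <= g i) -> (forall j, f' j <= g' j) ->
  \sum_i f i + \sum_j f' j = \sum_i g i + \sum_j g' j ->
  (forall i, f i = g i) /\ (forall j, f' j = g' j).
Proof.
move=> le_fg le_fg' eq_sum.
have le_sum : \sum_i f i <= \sum_i g i by apply: leq_sum => i _.
have le_sum' : \sum_j f' j <= \sum_j g' j by apply: leq_sum => j _.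
by split; apply: sum_leq_eq => //; lia.
Qed.

End Counting.

Section Independence.
Local Open Scope nat_scope.
Variables (T : finType) (e : rel T).
Hypothesis sym_irr_e : simple_graph e.

Lemma edge_sym x y : e x y = e y x.
Proof. by case: sym_irr_e => sym_e _; rewrite sym_e. Qed.

Lemma edge_irr x : e x x = false.
Proof. by case: sym_irr_e => _ irr_e; rewrite irr_e. Qed.

Lemma independentP (A : {set T}) :
  reflect (forall x y, x \in A -> y \in A -> ~~ e x y) (independent e A).
Proof.
apply: (iffP forall_inP) => [indA x y xA yA | indA x xA].
  by move/forall_inP: (indA x xA); apply.
by apply/forall_inP => y yA; apply: indA.
Qed.

Lemma independentS (A B : {set T}) :
  B \subset A -> independent e A -> independent e B.
Proof.
move=> /subsetP sBA /independentP indA; apply/independentP => x y xB yB.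
by apply: indA; apply: sBA.
Qed.

Lemma independent_leq_alpha (A : {set T}) : independent e A -> #|A| <= alpha e.
Proof. exact: (@leq_bigmax_cond _ (independent e) (fun A : {set T} => #|A|)). Qed.

Lemma exists_max_independent : exists M, max_independent e M.
Proof.
have indep0 : 0 < #|[pred A : {set T} | independent e A]|.
  by apply/card_gt0P; exists set0; rewrite inE; apply/independentP => x y; rewrite inE.
have [M indM alphaE] := eq_bigmax_cond (fun A : {set T} => #|A|) indep0.
by exists M; rewrite inE in indM; rewrite /max_independent indM /alpha alphaE eqxx.
Qed.

Lemma max_independentP M :
  reflect (independent e M /\ #|M| = alpha e) (max_independent e M).
Proof. by apply: (iffP andP) => -[indM /eqP]. Qed.

Lemma alpha_gt0 : 0 < #|T| -> 0 < alpha e.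
Proof.
case/card_gt0P => x _; apply: leq_trans (independent_leq_alpha (A := [set x]) _).
  by rewrite cards1.
by apply/independentP => y z; rewrite !inE => /eqP -> /eqP ->; rewrite edge_irr.
Qed.

Lemma subset_cnbhd (A : {set T}) : A \subset cnbhd e A.
Proof. exact: subsetUr. Qed.

Lemma cnbhd0 : cnbhd e set0 = set0.
Proof.
apply/setP => x; rewrite !inE orbF; apply/existsP => -[a].
by rewrite inE.
Qed.

Lemma max_independent_dominating M : max_independent e M -> cnbhd e M = setT.
Proof.
move=> /max_independentP [indM cardM]; apply/setP => x; rewrite in_setT.
apply/negPn/negP; rewrite !inE negb_or => /andP [/exists_inP noNx xM].
suff /independent_leq_alpha : independent e (x |: M).
  by rewrite cardsU1 xM -cardM ltnn.
apply/independentP => y z; rewrite !inE => /predU1P [-> | yM] /predU1P [-> | zM].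
- by rewrite edge_irr.
- by apply/negP => exz; apply: noNx; exists z; rewrite // edge_sym.
- by apply/negP => eyx; apply: noNx; exists y.
- by move/independentP: indM; apply.
Qed.

(* Replacing [M :&: cnbhd e A] by [A] inside [M] keeps it independent. *)
Lemma exchange_max_independent (A M : {set T}) :
  independent e A -> max_independent e M -> #|A| <= #|M :&: cnbhd e A|.
Proof.
move=> indA /max_independentP [indM cardM].
have no_edge u v : u \in A -> v \notin cnbhd e A -> ~~ e u v.
  move=> uA; rewrite !inE negb_or => /andP [/exists_inP noN _].
  by apply/negP => euv; apply: noN; exists u.
have /independent_leq_alpha : independent e ((M :\: cnbhd e A) :|: A).
  apply/independentP => x y /setUP [/setDP [xM xN] | xA] /setUP [/setDP [yM yN] | yA].
  - by move/independentP: indM; apply.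
  - by rewrite edge_sym; apply: no_edge.
  - exact: no_edge.
  - by move/independentP: indA; apply.
rewrite cardsU -cardM -(cardsID (cnbhd e A) M) addnC.
have /setP dis : (M :\: cnbhd e A) :&: A = set0.
  by apply/setP => x; rewrite !inE; case: (x \in A); rewrite ?orbT ?andbF.
by rewrite (eq_card dis) cards0 subn0 leq_add2r.
Qed.

End Independence.

Section VertexTransitive.
Local Open Scope nat_scope.
Variables (T : finType) (e : rel T).
Hypotheses (sym_irr_e : simple_graph e) (vt_e : vertex_transitive e).

Definition auts : {set {perm T}} :=
  [set g : {perm T} | [forall x, forall y, e (g x) (g y) == e x y]].

Lemma autsP g : reflect (automorphism e g) (g \in auts).
Proof.
rewrite inE; apply: (iffP forallP) => [autg x y | autg x].
  by move/forallP: (autg x) => /(_ y) /eqP.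
by apply/forallP => y; rewrite autg.
Qed.

Lemma auts1 : 1%g \in auts.
Proof. by apply/autsP => x y; rewrite !perm1. Qed.

Lemma autsM g h : g \in auts -> h \in auts -> (g * h)%g \in auts.
Proof. by move=> /autsP autg /autsP auth; apply/autsP => x y; rewrite !permM auth autg. Qed.

Lemma preimset_max_independent g M :
  g \in auts -> max_independent e M -> max_independent e (g @^-1: M).
Proof.
move=> /autsP autg /max_independentP [indM cardM]; apply/max_independentP; split.
  by apply/independentP => x y; rewrite !inE -autg; move/independentP: indM; apply.
by rewrite card_preimset //; apply: perm_inj.
Qed.

Section Hits.
Variable M : {set T}.
Hypothesis maxM : max_independent e M.

Definition hits u := #|[set g in auts | g u \in M]|.

Lemma hits_const u v : hits u = hits v.
Proof.
wlog suff : u v / hits u <= hits v by move=> le; apply/eqP; rewrite eqn_leq !le.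
have [h [/autsP autsh hvu]] := vt_e v u.
rewrite /hits -(card_imset _ (mulgI h)); apply/subset_leq_card/subsetP => _ /imsetP [g + ->].
by rewrite in_set => /andP [autsg gu]; rewrite in_set autsM // permM hvu.
Qed.

Lemma sum_hits : \sum_u hits u = #|auts| * #|M|.
Proof.
rewrite /hits (double_count _ _ (fun u (g : {perm T}) => g u \in M)) -sum_nat_const.
apply: eq_bigr => g _; rewrite -(card_preimset M (@perm_inj _ g)).
by apply: eq_card => x; rewrite !inE.
Qed.

Lemma sum_hits_cnbhd (A : {set T}) :
  independent e A -> #|auts| * #|A| <= \sum_(u in cnbhd e A) hits u.
Proof.
move=> indA; rewrite /hits (double_count _ _ (fun u (g : {perm T}) => g u \in M)) -sum_nat_const.
apply: leq_sum => g autsg.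
have := exchange_max_independent sym_irr_e indA (preimset_max_independent autsg maxM).
by move/leq_trans; apply; apply/subset_leq_card/subsetP => x; rewrite !inE andbC.
Qed.

End Hits.

Lemma vt_independent_bound (A : {set T}) :
  independent e A -> #|A| * #|T| <= alpha e * #|cnbhd e A|.
Proof.
move=> indA.
case: (pickP (fun _ : T => true)) => [u0 _ | T0]; last by rewrite (eq_card0 T0) muln0.
have [M maxM] := exists_max_independent e.
have /max_independentP [_ <-] := maxM.
have hitsE v := hits_const M v u0.
have := sum_hits_cnbhd maxM indA; have := sum_hits M.
rewrite !(eq_bigr _ (fun v _ => hitsE v)) !sum_nat_const => sumT sumA.
have auts_gt0 : 0 < #|auts| by apply/card_gt0P; exists 1%g; apply: auts1.
rewrite -(leq_pmul2l auts_gt0) mulnA (leq_trans (leq_mul sumA (leqnn #|T|))) //.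
rewrite -mulnA (mulnC (hits M u0)) sumT; lia.
Qed.

End VertexTransitive.

Section NatFractions.
Local Open Scope ring_scope.
Variables p q r s : nat.
Hypotheses (q_gt0 : (0 < q)%N) (s_gt0 : (0 < s)%N).

Lemma ler_nat_frac : ((p%:R / q%:R : rat) <= r%:R / s%:R) = (p * s <= r * q)%N.
Proof. by rewrite ler_pdivrMr ?ltr0n // mulrAC ler_pdivlMr ?ltr0n // -!natrM ler_nat. Qed.

Lemma ltr_nat_frac : ((p%:R / q%:R : rat) < r%:R / s%:R) = (p * s < r * q)%N.
Proof. by rewrite ltr_pdivrMr ?ltr0n // mulrAC ltr_pdivlMr ?ltr0n // -!natrM ltr_nat. Qed.

Lemma eq_nat_frac : ((p%:R / q%:R : rat) = r%:R / s%:R) <-> (p * s = r * q)%N.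
Proof.
split => [/eqP | eq_ps].
  by rewrite eqr_div ?pnatr_eq0 -?lt0n // -!natrM eqr_nat => /eqP.
by apply/eqP; rewrite eqr_div ?pnatr_eq0 -?lt0n // -!natrM eq_ps.
Qed.

End NatFractions.

Lemma tight_imprimitive (T : finType) (e : rel T) (A : {set T}) :
  independent e A -> (0 < #|A| < alpha e)%N ->
  (#|A| * #|T| = alpha e * #|cnbhd e A|)%N -> imprimitive e A.
Proof.
move=> indA /andP [A_gt0 A_lt] tight; split=> //.
  by rewrite -card_gt0.
apply/eq_nat_frac => //; first exact: leq_trans A_gt0 (subset_leq_card (subsetUr _ _)).
exact: leq_trans A_gt0 (max_card _).
Qed.

Lemma tight_empty_or_max (T : finType) (e : rel T) (A : {set T}) :
  ~ IS_imprimitive e -> independent e A ->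
  (#|A| * #|T| = alpha e * #|cnbhd e A|)%N -> A = set0 \/ #|A| = alpha e.
Proof.
move=> not_imp indA tight.
case: (posnP #|A|) => [/cards0_eq | A_gt0]; [by left | right].
apply/eqP; rewrite eqn_leq independent_leq_alpha // leqNgt; apply/negP => A_lt.
by apply: not_imp; exists A; apply: tight_imprimitive; rewrite ?A_gt0.
Qed.

Lemma mem_card_full (T : finType) (A : {set T}) x : #|A| = #|T| -> x \in A.
Proof. by rewrite -cardsT => /subset_cardP /(_ (subsetT A)) ->; rewrite in_setT. Qed.

Section Disconnected.
Local Open Scope nat_scope.
Variables (T : finType) (e : rel T).
Hypotheses (sym_irr_e : simple_graph e) (vt_e : vertex_transitive e).

Lemma connectedP : reflect (connected e) [forall x, forall y, connect e x y].
Proof.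
apply: (iffP forallP) => [con x y | con x]; last by apply/forallP.
by move/forallP: (con x).
Qed.

Lemma cnbhd_max_independent_closed M (K : {set T}) :
  max_independent e M -> closed e K -> cnbhd e (M :&: K) = K.
Proof.
move=> maxM closedK; apply/setP => z; apply/idP/idP.
  rewrite !inE => /orP [/exists_inP [a] | /andP [_ //]].
  by rewrite inE => /andP [_ aK] /closedK <-.
move=> zK; have := max_independent_dominating sym_irr_e maxM.
move/setP/(_ z); rewrite !inE => /orP [/exists_inP [a aM eaz] | zM].
  by apply/orP; left; apply/exists_inP; exists a; rewrite // inE aM (closedK _ _ eaz).
by rewrite zM zK orbT.
Qed.

Lemma disconnected_imprimitive : ~ connected e -> IS_imprimitive e.
Proof.
move/connectedP => /forallPn [x /forallPn [y not_xy]].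
pose K := [set z | connect e x z].
have closedK : closed e K.
  by move=> u v euv; rewrite !inE; exact: (connect_closed (sym_connect_sym sym_irr_e.1) x euv).
have closedKC : closed e (~: K).
  by move=> u v euv; have := closedK u v euv; rewrite !inE => ->.
have [M maxM] := exists_max_independent e.
have /max_independentP [indM cardM] := maxM.
have cnbhdA := cnbhd_max_independent_closed maxM closedK.
have cnbhdB := cnbhd_max_independent_closed maxM closedKC.
have indA : independent e (M :&: K) by apply: independentS indM; apply: subsetIl.
have indB : independent e (M :&: ~: K) by apply: independentS indM; apply: subsetIl.
have := vt_independent_bound sym_irr_e vt_e indA; rewrite cnbhdA => boundA.
have := vt_independent_bound sym_irr_e vt_e indB; rewrite cnbhdB => boundB.
have total : #|M :&: K| * #|T| + #|M :&: ~: K| * #|T| = alpha e * #|K| + alpha e * #|~: K|.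
  by rewrite -mulnDl -mulnDr -setDE cardsID cardsC cardM.
have nonempty (B : {set T}) z : z \in cnbhd e B -> 0 < #|B|.
  by rewrite card_gt0; apply: contraTneq => ->; rewrite cnbhd0 inE.
have A_gt0 : 0 < #|M :&: K| by apply: (nonempty _ x); rewrite cnbhdA inE connect0.
have B_gt0 : 0 < #|M :&: ~: K| by apply: (nonempty _ y); rewrite cnbhdB !inE.
have splitM : #|M :&: K| + #|M :&: ~: K| = alpha e by rewrite -setDE cardsID.
by exists (M :&: K); apply: tight_imprimitive => //; [rewrite A_gt0 | rewrite cnbhdA]; lia.
Qed.

End Disconnected.

Lemma connected_max_independent_family (T U : finType) (eG : rel T) (eH : rel U)
    (F : U -> {set T}) :
  symmetric eH -> connected eH ->
  (forall y, max_independent eG (F y)) ->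
  (forall y y' x x', eH y y' -> x \in F y -> x' \in F y' -> ~~ eG x x') ->
  forall y y', F y = F y'.
Proof.
move=> sym_eH con maxF no_edge.
have adjacent_eq y y' : eH y y' -> F y = F y'.
  move=> eyy; have [/max_independentP [indF cardF] /max_independentP [indF' cardF']] := (maxF y, maxF y').
  have /independent_leq_alpha : independent eG (F y :|: F y').
    apply/independentP => x x' /setUP [xF | xF'] /setUP [x'F | x'F'].
    - by move/independentP: indF; apply.
    - exact: no_edge eyy xF x'F'.
    - by apply: no_edge xF' x'F; rewrite sym_eH.
    - by move/independentP: indF'; apply.
  move=> card_le.
  have unionE : F y :|: F y' = F y by apply/esym/eqP; rewrite eqEcard subsetUl cardF.
  have unionE' : F y :|: F y' = F y' by apply/esym/eqP; rewrite eqEcard subsetUr cardF'.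
  by rewrite -unionE unionE'.
move=> y y'.
have closedF : closed eH [pred z | F z == F y].
  by move=> u v /adjacent_eq; rewrite !inE => ->.
have := closed_connect closedF (con y y').
by rewrite !inE eqxx => /esym /eqP.
Qed.

Lemma dprod_card0_r (T U : finType) (eG : rel T) (eH : rel U) :
  #|U| = 0 -> alpha (dprod_rel eG eH) = 0 /\ MIS_normal eG eH.
Proof.
move=> U0; have S0 (S : {set T * U}) : S = set0.
  by apply/setP => -[x y]; have := card0_eq U0 y; rewrite !inE.
split.
  have [S /max_independentP [_ <-]] := exists_max_independent (dprod_rel eG eH).
  by rewrite (S0 S) cards0.
move=> S _; left; exists set0; first by apply/independentP => x y; rewrite inE.
by rewrite (S0 S) (S0 (setX _ _)).
Qed.

Section DirectProduct.
Local Open Scope nat_scope.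
Variables (T U : finType) (eG : rel T) (eH : rel U).
Hypotheses (sym_irr_G : simple_graph eG) (sym_irr_H : simple_graph eH).
Hypotheses (vtG : vertex_transitive eG) (vtH : vertex_transitive eH).
Hypotheses (T_gt0 : 0 < #|T|) (U_gt0 : 0 < #|U|).
Hypothesis ratio_le : alpha eH * #|T| <= alpha eG * #|U|.

Section RowsColumns.
Variable S : {set T * U}.
Hypothesis indS : independent (dprod_rel eG eH) S.

Lemma dprod_no_edge x y x' y' :
  (x, y) \in S -> (x', y') \in S -> eG x x' -> eH y y' -> False.
Proof.
move=> xyS xyS' exx eyy; move/independentP: indS => /(_ _ _ xyS xyS').
by rewrite /dprod_rel /= exx eyy.
Qed.

(* [isolatedS x] is J_x and [colS y] is C_y; [freeS y] is the part of column [y]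
   outside the sets N[J_x], which contains N[C_y]. *)
Definition rowS x := [set y | (x, y) \in S].
Definition isolatedS x := rowS x :\: nbhd eH (rowS x).
Definition colS y := [set x | y \in rowS x :&: nbhd eH (rowS x)].
Definition freeS y := [set x | y \notin cnbhd eH (isolatedS x)].

Lemma isolatedS_independent x : independent eH (isolatedS x).
Proof.
apply/independentP => y z; rewrite !inE => /andP [_ yS] /andP [/exists_inP no_nb _].
by apply/negP => eyz; apply: no_nb; exists y; rewrite ?inE.
Qed.

Lemma colS_independent y : independent eG (colS y).
Proof.
apply/independentP => x x'; rewrite !inE => /andP [_ /exists_inP [a]].
rewrite inE => xaS eay /andP [x'yS _]; apply/negP => exx.
exact: dprod_no_edge xaS x'yS exx eay.
Qed.

Lemma cnbhd_colS_sub y : cnbhd eG (colS y) \subset freeS y.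
Proof.
apply/subsetP => x'; rewrite !inE negb_or => /orP [/exists_inP [x] | ].
  rewrite !inE => /andP [xyS /exists_inP [a]]; rewrite inE => xaS eay exx.
  apply/andP; split.
    apply/exists_inP => -[j]; rewrite !inE => /andP [_ x'jS] ejy.
    by apply: dprod_no_edge x'jS xyS _ ejy; rewrite edge_sym.
  by apply/negP => /andP [_ x'yS]; apply: dprod_no_edge xaS x'yS exx eay.
move=> /andP [x'yS nb_y]; rewrite nb_y andbT; apply/exists_inP => -[j].
rewrite !inE => /andP [/exists_inP no_nb _] ejy.
by apply: no_nb; exists y; rewrite ?inE // edge_sym.
Qed.

Lemma isolatedS_bound x :
  #|isolatedS x| * #|T| <= alpha eG * #|cnbhd eH (isolatedS x)|.
Proof.
have boundH := vt_independent_bound sym_irr_H vtH (isolatedS_independent x).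
rewrite -(leq_pmul2r U_gt0) mulnAC.
apply: leq_trans (_ : alpha eH * #|T| * #|cnbhd eH (isolatedS x)| <= _).
  by rewrite [X in _ <= X]mulnAC leq_mul2r boundH orbT.
by rewrite [X in _ <= X]mulnAC leq_mul2r ratio_le orbT.
Qed.

Lemma colS_bound y : #|colS y| * #|T| <= alpha eG * #|freeS y|.
Proof.
apply: leq_trans (vt_independent_bound sym_irr_G vtG (colS_independent y)) _.
by rewrite leq_mul2l subset_leq_card ?orbT ?cnbhd_colS_sub.
Qed.

Lemma card_rowsS_colsS : #|S| = \sum_x #|isolatedS x| + \sum_y #|colS y|.
Proof.
rewrite card_set_pairs.
have -> : \sum_y #|colS y| = \sum_x #|rowS x :&: nbhd eH (rowS x)|.
  rewrite -(double_count_set (fun x y => y \in rowS x :&: nbhd eH (rowS x))).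
  by apply: eq_bigr => x _; apply: eq_card => y; rewrite !inE.
by rewrite -big_split; apply: eq_bigr => x _; rewrite /= addnC cardsID.
Qed.

Lemma sum_cnbhd_isolatedS_freeS :
  \sum_x #|cnbhd eH (isolatedS x)| + \sum_y #|freeS y| = #|T| * #|U|.
Proof.
have -> : \sum_y #|freeS y| = \sum_x #|~: cnbhd eH (isolatedS x)|.
  rewrite -(double_count_set (fun x y => y \notin cnbhd eH (isolatedS x))).
  by apply: eq_bigr => x _; apply: eq_card => y; rewrite !inE.
by rewrite -big_split /=; under eq_bigr do rewrite cardsC; rewrite sum_nat_const.
Qed.

Lemma card_dprod_independent_leq : #|S| <= alpha eG * #|U|.
Proof.
rewrite -(leq_pmul2r T_gt0) -mulnA (mulnC #|U|) -sum_cnbhd_isolatedS_freeS.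
rewrite card_rowsS_colsS mulnDl mulnDr.
apply: leq_add; rewrite big_distrl big_distrr; apply: leq_sum => i _.
  exact: isolatedS_bound.
exact: colS_bound.
Qed.

Section Maximum.
Hypothesis cardS : #|S| = alpha eG * #|U|.

Lemma rowsS_colsS_tight :
  (forall x, #|isolatedS x| * #|T| = alpha eG * #|cnbhd eH (isolatedS x)|) /\
  (forall y, #|colS y| * #|T| = alpha eG * #|freeS y|).
Proof.
apply: sum_leq_eq2 => [x | y | ]; [exact: isolatedS_bound | exact: colS_bound | ].
rewrite -!big_distrl -!big_distrr -mulnDl -mulnDr -card_rowsS_colsS.
by rewrite sum_cnbhd_isolatedS_freeS cardS mulnAC mulnA.
Qed.

Lemma colS_full (iso0 : forall x, isolatedS x = set0) y : #|colS y| = alpha eG.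
Proof.
move: y; apply: sum_leq_eq => [y | ].
  exact/independent_leq_alpha/colS_independent.
rewrite sum_nat_const mulnC -cardS card_rowsS_colsS [X in X + _]big1 ?add0n // => x _.
by rewrite iso0 cards0.
Qed.

Lemma isolatedS_full (ratio_eq : alpha eH * #|T| = alpha eG * #|U|)
    (col0 : forall y, colS y = set0) x :
  #|isolatedS x| = alpha eH.
Proof.
move: x; apply: sum_leq_eq => [x | ].
  exact/independent_leq_alpha/isolatedS_independent.
rewrite sum_nat_const mulnC ratio_eq -cardS card_rowsS_colsS [X in _ + X]big1 ?addn0 // => y _.
by rewrite col0 cards0.
Qed.

Lemma dprod_full_cols (iso0 : forall x, isolatedS x = set0) :
  connected eH -> exists2 I, independent eG I & S = setX I [set: U].
Proof.
move=> conH; have [y0 _] := card_gt0P U_gt0.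
have colSE x y : (x \in colS y) = ((x, y) \in S).
  have /setP/(_ y) := iso0 x; rewrite !inE.
  by case: ((x, y) \in S); rewrite ?andbT ?andbF // => /negbFE.
have maxC y : max_independent eG (colS y).
  by apply/max_independentP; split; [exact: colS_independent | exact: colS_full].
have no_edge y y' x x' : eH y y' -> x \in colS y -> x' \in colS y' -> ~~ eG x x'.
  by rewrite !colSE => eyy xyS xyS'; apply/negP => exx; apply: dprod_no_edge xyS xyS' exx eyy.
have same_cols := connected_max_independent_family sym_irr_H.1 conH maxC no_edge.
exists (colS y0); first exact: colS_independent.
by apply/setP => -[x y]; rewrite in_setX in_setT andbT -colSE (same_cols y y0).
Qed.

Lemma dprod_full_rows (ratio_eq : alpha eH * #|T| = alpha eG * #|U|)
    (col0 : forall y, colS y = set0) :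
  connected eG -> exists2 J, independent eH J & S = setX [set: T] J.
Proof.
move=> conG; have [x0 _] := card_gt0P T_gt0.
have isolatedSE x y : (y \in isolatedS x) = ((x, y) \in S).
  have /setP/(_ x) := col0 y; rewrite !inE.
  by case: ((x, y) \in S); rewrite /= ?andbT ?andbF // => ->.
have maxJ x : max_independent eH (isolatedS x).
  by apply/max_independentP; split; [exact: isolatedS_independent | exact: isolatedS_full].
have no_edge x x' y y' : eG x x' -> y \in isolatedS x -> y' \in isolatedS x' -> ~~ eH y y'.
  by rewrite !isolatedSE => exx xyS xyS'; apply/negP => eyy; apply: dprod_no_edge xyS xyS' exx eyy.
have same_rows := connected_max_independent_family sym_irr_G.1 conG maxJ no_edge.
exists (isolatedS x0); first exact: isolatedS_independent.
by apply/setP => -[x y]; rewrite in_setX in_setT -isolatedSE (same_rows x x0).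
Qed.

Lemma isolatedS_empty_of_ratio_lt :
  alpha eH * #|T| < alpha eG * #|U| -> forall x, isolatedS x = set0.
Proof.
move=> ratio_lt x; have [tightJ _] := rowsS_colsS_tight.
have boundH := vt_independent_bound sym_irr_H vtH (isolatedS_independent x).
have := tightJ x; set n := #|cnbhd eH _| => tight.
have n0 : n = 0 by apply/eqP; rewrite -leqn0 leqNgt; apply/negP => n_gt0; nia.
apply/eqP; rewrite -subset0 -(cards0_eq n0); exact: subset_cnbhd.
Qed.

Section EqualRatio.
Hypothesis ratio_eq : alpha eH * #|T| = alpha eG * #|U|.

Lemma isolatedS_empty_or_full :
  ~ IS_imprimitive eH -> forall x, isolatedS x = set0 \/ #|isolatedS x| = alpha eH.
Proof.
move=> not_impH x; have [tightJ _] := rowsS_colsS_tight.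
apply: tight_empty_or_max (isolatedS_independent x) _ => //.
by have := tightJ x; nia.
Qed.

Lemma colS_empty_or_full :
  ~ IS_imprimitive eG -> forall y, colS y = set0 \/ #|colS y| = alpha eG.
Proof.
move=> not_impG y; have [_ tightC] := rowsS_colsS_tight.
apply: tight_empty_or_max (colS_independent y) _ => //.
have := vt_independent_bound sym_irr_G vtG (colS_independent y).
by have := subset_leq_card (cnbhd_colS_sub y); have := tightC y; nia.
Qed.

Lemma dprod_equal_ratio_product :
  ~ IS_imprimitive eG -> ~ IS_imprimitive eH ->
  (exists2 I, independent eG I & S = setX I [set: U]) \/
  (exists2 J, independent eH J & S = setX [set: T] J).
Proof.
move=> not_impG not_impH; have [tightJ tightC] := rowsS_colsS_tight.
have alphaG_gt0 := alpha_gt0 sym_irr_G T_gt0.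
case: (pickP (fun y => #|colS y| == alpha eG)) => [y1 /eqP fullC | no_full]; [left | right].
  apply: dprod_full_cols; last by apply: NNPP => /(disconnected_imprimitive sym_irr_H vtH).
  move=> x; case: (isolatedS_empty_or_full not_impH x) => // fullJ; exfalso.
  have : x \in freeS y1.
    by apply: mem_card_full; apply/eqP; rewrite -(eqn_pmul2l alphaG_gt0) -tightC fullC.
  rewrite inE mem_card_full //; apply/eqP; rewrite -(eqn_pmul2l alphaG_gt0) -tightJ.
  by rewrite fullJ ratio_eq mulnC.
apply: dprod_full_rows => //; last by apply: NNPP => /(disconnected_imprimitive sym_irr_G vtG).
move=> y; case: (colS_empty_or_full not_impG y) => // fullC.
by have := no_full y; rewrite fullC eqxx.
Qed.

End EqualRatio.
End Maximum.
End RowsColumns.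

Lemma alpha_dprod : alpha (dprod_rel eG eH) = alpha eG * #|U|.
Proof.
have [S /max_independentP [indS cardS]] := exists_max_independent (dprod_rel eG eH).
apply/eqP; rewrite eqn_leq -{1}cardS card_dprod_independent_leq //=.
have [M /max_independentP [indM <-]] := exists_max_independent eG.
rewrite -cardsT -cardsX; apply: independent_leq_alpha.
apply/independentP => -[x y] [x' y']; rewrite !in_setX => /andP [xM _] /andP [x'M _].
by rewrite /dprod_rel negb_and (independentP _ _ indM).
Qed.

Lemma MIS_normal_or_exceptional :
  MIS_normal eG eH \/
  (ind_ratio eG = ind_ratio eH /\ (IS_imprimitive eG \/ IS_imprimitive eH)) \/
  (ind_ratio eH < ind_ratio eG /\ ~ connected eH)%R.
Proof.
apply: NNPP => /not_or_and [not_normal /not_or_and [not_equal not_strict]].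
apply: not_normal => S /max_independentP [indS]; rewrite alpha_dprod => cardS.
move: ratio_le; rewrite leq_eqVlt => /orP [/eqP ratio_eq | ratio_lt].
  have ratioE : ind_ratio eG = ind_ratio eH by apply/eq_nat_frac.
  by apply: dprod_equal_ratio_product => // imp; apply: not_equal; split; auto.
left; apply: dprod_full_cols => //; first exact: isolatedS_empty_of_ratio_lt.
by apply: NNPP => disconH; apply: not_strict; rewrite /ind_ratio ltr_nat_frac.
Qed.

End DirectProduct.

Local Open Scope ring_scope.

Theorem theorem1p8 (T U : finType) (eG : rel T) (eH : rel U) :
  simple_graph eG -> simple_graph eH ->
  vertex_transitive eG -> vertex_transitive eH ->
  ind_ratio eH <= ind_ratio eG ->
  alpha (dprod_rel eG eH) = (alpha eG * #|U|)%N /\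
  (MIS_normal eG eH \/
   (ind_ratio eG = ind_ratio eH /\ (IS_imprimitive eG \/ IS_imprimitive eH)) \/
   (ind_ratio eH < ind_ratio eG /\ ~ connected eH)).
Proof.
move=> sym_irr_G sym_irr_H vtG vtH ratio_le.
have [U0 | U_gt0] := posnP #|U|.
  by have [-> normal] := dprod_card0_r eG eH U0; rewrite U0 muln0; split=> //; left.
have T_gt0 : (0 < #|T|)%N.
  (* otherwise [ind_ratio eG] is the junk value [alpha eG / 0 = 0] *)
  rewrite lt0n; apply/eqP => T0; move: ratio_le; rewrite /ind_ratio T0 invr0 mulr0.
  by rewrite leNgt divr_gt0 // ltr0n // alpha_gt0.
have ratio_le_nat : (alpha eH * #|T| <= alpha eG * #|U|)%N by rewrite -ler_nat_frac.
by split; [exact: alpha_dprod | exact: MIS_normal_or_exceptional].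
Qed.
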